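(* In the setting of the context, assume $G_{xy}^{[1]}=1$, $G_x/G_x^{[1]}\cong S_5$ and $G_x^{[1]}\cong A_4$. Then $G_e$ is isomorphic to one of $\mathrm{L}_1=\langle(1,2,3),(2,3,4),(5,6,7),(6,7,8),(1,2)(5,6),(1,5)(2,6)(3,7)(4,8)\rangle$ or $\mathrm{L}_2=\langle(1,2,3),(2,3,4),(5,6,7),(6,7,8),(1,6,2,5)(3,7)(4,8)\rangle$ (subgroups of $S_8$).
   Context: $\mathcal{A}=(G_x,G_e,G_{xy})$ is a finite, primitive amalgam of degree $(5,2)$ (no nontrivial subgroup of $G_{xy}$ normal in both $G_x$ and $G_e$; $|G_x:G_{xy}|=5$, $|G_e:G_{xy}|=2$), $G=G_x*_{G_{xy}}G_e$ acts on the coset graph (5-valent tree) $\Gamma$, $x$ is the vertex with stabiliser $G_x$, $y$ the neighbour with $G_e$ the setwise stabiliser of $\{x,y\}$ and $G_x\cap G_y=G_{xy}$. $G_z^{[1]}$ is the pointwise stabiliser of $z$ and its neighbours, $G_{xy}^{[1]}=G_x^{[1]}\cap G_y^{[1]}$. *)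

From HB Require Import structures.
From mathcomp Require Import all_boot all_order all_fingroup all_solvable.
Set Implicit Arguments. Unset Strict Implicit. Unset Printing Implicit Defensive.
Import GroupScope.

(* Point k (1 <= k <= 8) of {1,...,8}, encoded as the ordinal k-1 of 'I_8. *)
Definition pt (k : nat) : 'I_8 := inord k.-1.

(* The cycle (a1, a2, ..., ak), a1 -> a2 -> ... -> ak -> a1.
   With MathComp's convention (s * t) x = t (s x), this equals
   tperm a1 a2 * tperm a1 a3 * ... * tperm a1 ak. *)
Definition cyc (s : seq nat) : {perm 'I_8} :=
  match s with
  | [::] => 1
  | a :: t => foldr (fun b p => tperm (pt a) (pt b) * p) 1 t
  end.


Definition L1 : {set {perm 'I_8}} :=
  <<[set cyc [:: 1%N; 2%N; 3%N]; cyc [:: 2%N; 3%N; 4%N]; cyc [:: 5%N; 6%N; 7%N]; cyc [:: 6%N; 7%N; 8%N];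
        (cyc [:: 1%N; 2%N] * cyc [:: 5%N; 6%N])%g;
        (cyc [:: 1%N; 5%N] * cyc [:: 2%N; 6%N] * cyc [:: 3%N; 7%N] * cyc [:: 4%N; 8%N])%g]>>.

Definition L2 : {set {perm 'I_8}} :=
  <<[set cyc [:: 1%N; 2%N; 3%N]; cyc [:: 2%N; 3%N; 4%N]; cyc [:: 5%N; 6%N; 7%N]; cyc [:: 6%N; 7%N; 8%N];
        (cyc [:: 1%N; 6%N; 2%N; 5%N] * cyc [:: 3%N; 7%N] * cyc [:: 4%N; 8%N])%g]>>.

(* The amalgam (G_x, G_e, G_xy) is represented inside a finite group gT,
   with G_xy = G_x :&: G_e. *)
Definition Gxy (gT : finGroupType) (Gx Ge : {set gT}) : {set gT} := Gx :&: Ge.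

(* G_x^{[1]}: kernel of the action of G_x on the neighbours of x, i.e. on
   the cosets of G_xy in G_x; this is the core of G_xy in G_x. *)
Definition Gx1 (gT : finGroupType) (Gx Ge : {set gT}) : {set gT} :=
  gcore (Gxy Gx Ge) Gx.

(* For t in G_e \ G_xy we have y = x t, G_y = G_x^t and G_y^{[1]} = (G_x^{[1]})^t,
   so G_xy^{[1]} = G_x^{[1]} :&: (G_x^{[1]})^t. *)
Definition Gxy1 (gT : finGroupType) (Gx Ge : {set gT}) (t : gT) : {set gT} :=
  Gx1 Gx Ge :&: (Gx1 Gx Ge :^ t).

Definition primitive_amalgam (gT : finGroupType) (Gx Ge : {group gT}) : Prop :=
  forall H : {group gT}, H \subset Gxy Gx Ge -> H <| Gx -> H <| Ge -> H = 1 :> {set gT}.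

From HB Require Import structures.
From mathcomp Require Import all_boot all_order all_fingroup all_solvable.
Set Implicit Arguments. Unset Strict Implicit. Unset Printing Implicit Defensive.
Import GroupScope.

(* Let A = G_x^[1] and B = A^t = G_y^[1]: two copies of A_4 inside H = G_xy, both
   normalised by H and meeting trivially, so they commute; |G_e| = 2 |H| = 576.
   G_e permutes the eight Sylow 3-subgroups of A and B by conjugation, H preserving
   the two sets of four and t exchanging them.  An element of H normalising every
   Sylow 3-subgroup of B centralises B, hence lies in A, because in G_x / A = S_5 no
   non-trivial element has a centraliser of order 24 or more (and symmetrically for
   A).  So the action is faithful, A and B act as the alternating groups of the two
   blocks, and these are the only elements of the image of H fixing a block
   pointwise.  A finite computation in S_8 then shows that the image of H lies in
   L1 :&: L2 and that every block-swapping permutation lies in L1 or L2; since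
   |L1| = |L2| = |G_e|, G_e is isomorphic to the one containing the image of t. *)

(* Permutations of 'I_n.+1 are encoded by their lists of values; [pcode_mul u v]
   encodes "u, then v", the composition order of {perm _}. *)
Definition pcode_mul (u v : seq nat) := [seq nth 0 v j | j <- u].

Section PermCode.

Variable n : nat.
Implicit Types (p q : {perm 'I_n.+1}) (u v : seq nat).

Definition pcode_seg p m k : seq nat := [seq val (p (inord j)) | j <- iota m k].
Definition pcode p := pcode_seg p 0 n.+1.
Definition pcode_id := iota 0 n.+1.
Definition pcode_tperm a b :=
  mkseq (fun j => if j == a then b else if j == b then a else j) n.+1.

Lemma nth_pcode p (i : 'I_n.+1) : nth 0 (pcode p) i = p i.
Proof. by rewrite (nth_map 0) ?size_iota // nth_iota // inord_val. Qed.

Lemma pcode_inj : injective pcode.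
Proof. by move=> p q e; apply/permP => i; apply/val_inj; rewrite /= -!nth_pcode e. Qed.

Lemma pcodeM p q : pcode (p * q) = pcode_mul (pcode p) (pcode q).
Proof.
rewrite /pcode_mul /pcode /pcode_seg -map_comp; apply/eq_in_map => j.
by rewrite mem_iota /= => ltj; rewrite permM -(nth_pcode q).
Qed.

Lemma pcode1 : pcode 1 = pcode_id.
Proof.
rewrite /pcode /pcode_seg -[RHS]map_id; apply/eq_in_map => j; rewrite mem_iota /= => ltj.
by rewrite perm1 inordK.
Qed.

Lemma inord_eqE (a b : nat) :
  a <= n -> b <= n -> (inord a == inord b :> 'I_n.+1) = (a == b).
Proof. by move=> le_an le_bn; rewrite -val_eqE /= !inordK. Qed.

Lemma pcode_tpermE a b : a <= n -> b <= n ->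
  pcode (tperm (inord a) (inord b)) = pcode_tperm a b.
Proof.
move=> le_an le_bn; rewrite /pcode /pcode_seg /pcode_tperm /mkseq.
apply/eq_in_map => j; rewrite mem_iota /= => ltj; rewrite /tperm permE /= !inord_eqE //.
by case: ifP => _; [|case: ifP => _]; rewrite inordK.
Qed.

Lemma pcode_seg_perm p m k (s : seq nat) :
  m + k <= n.+1 -> uniq s -> size s = k ->
  (forall i : 'I_n.+1, m <= i < m + k -> val (p i) \in s) ->
  pcode_seg p m k \in permutations s.
Proof.
move=> lemk uniq_s size_s ps; rewrite mem_permutations.
have lt_n1 j : j \in iota m k -> j < n.+1.
  by rewrite mem_iota => /andP[_ lt]; apply: leq_trans lemk.
have uniq_seg : uniq (pcode_seg p m k).
  rewrite map_inj_in_uniq ?iota_uniq // => i j /lt_n1 lti /lt_n1 ltj.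
  by move/val_inj/perm_inj/(congr1 val); rewrite /= !inordK.
apply: uniq_perm => //; apply: (uniq_min_size uniq_seg _ _).2.
- move=> _ /mapP[j jmk ->]; apply: ps.
  by rewrite inordK ?lt_n1 // -mem_iota.
- by rewrite size_map size_iota size_s.
Qed.

Lemma pcode_permutations p : pcode p \in permutations pcode_id.
Proof.
apply: pcode_seg_perm; rewrite ?iota_uniq ?size_iota //.
by move=> i _; rewrite mem_iota add0n ltn_ord.
Qed.

Lemma pcode_blocks p m (s1 s2 : seq nat) : m <= n.+1 ->
  uniq s1 -> size s1 = m -> uniq s2 -> size s2 = n.+1 - m ->
  (forall i : 'I_n.+1, i < m -> val (p i) \in s1) ->
  (forall i : 'I_n.+1, m <= i -> val (p i) \in s2) ->
  pcode p \in [seq x ++ y | x <- permutations s1, y <- permutations s2].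
Proof.
move=> lemn u1 z1 u2 z2 p1 p2.
have -> : pcode p = pcode_seg p 0 m ++ pcode_seg p m (n.+1 - m).
  by rewrite -map_cat -iotaD subnKC.
apply: allpairs_f; apply: pcode_seg_perm => //; rewrite ?subnKC //.
by move=> i /andP[le_mi _]; apply: p2.
Qed.

Lemma pcode_fix_take p m :
  take m (pcode p) = iota 0 m -> forall i : 'I_n.+1, i < m -> p i = i.
Proof.
move=> e i lt_im; apply/val_inj.
by rewrite /= -nth_pcode -(nth_take _ lt_im) e nth_iota.
Qed.

Lemma pcode_fix_drop p m :
  drop m (pcode p) = iota m (n.+1 - m) -> forall i : 'I_n.+1, m <= i -> p i = i.
Proof.
move=> e i le_mi; apply/val_inj; rewrite /= -nth_pcode -(subnKC le_mi) -nth_drop e.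
by rewrite nth_iota // ltn_sub2r // (leq_ltn_trans le_mi).
Qed.

Fixpoint add_new (seen l : seq (seq nat)) : seq (seq nat) :=
  if l is c :: l' then add_new (if c \in seen then seen else c :: seen) l' else seen.

Lemma mem_add_new seen l c : (c \in add_new seen l) = (c \in seen) || (c \in l).
Proof.
elim: l seen => [|d l IH] seen /=; first by rewrite orbF.
rewrite IH in_cons; case: ifP => [d_seen|_]; last by rewrite in_cons -orbA orbCA.
by have [->|] := eqVneq c d; rewrite ?d_seen.
Qed.

Lemma uniq_add_new seen l : uniq seen -> uniq (add_new seen l).
Proof. by elim: l seen => [|d l IH] seen //= ?; apply: IH; case: ifP => //= ->. Qed.

(* [add_new] prepends the elements it adds, so the new frontier is a prefix.
   Soundness only needs the frontier to lie in the explored list; completeness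
   is checked a posteriori by [bfs_closed]. *)
Definition bfs_step gs (st : seq (seq nat) * seq (seq nat)) :=
  let seen := add_new st.1 [seq pcode_mul c g | c <- st.2, g <- gs] in
  (seen, take (size seen - size st.1) seen).

Definition bfs_state gs k := iter k (bfs_step gs) ([:: pcode_id], [:: pcode_id]).
Definition bfs gs k := (bfs_state gs k).1.

Definition bfs_closed gs l := all (fun c => all (fun g => pcode_mul c g \in l) gs) l.

Lemma uniq_bfs gs k : uniq (bfs gs k).
Proof. by rewrite /bfs /bfs_state; elim: k => //= k IH; apply: uniq_add_new. Qed.

Lemma pcode_id_bfs gs k : pcode_id \in bfs gs k.
Proof. by rewrite /bfs /bfs_state; elim: k => [|k IH] /=; rewrite ?inE ?mem_add_new ?IH. Qed.

Lemma bfs_pcode_gen (S : seq {perm 'I_n.+1}) k c :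
  c \in bfs (map pcode S) k -> exists2 p, p \in <<[set x in S]>> & pcode p = c.
Proof.
pose P d := exists2 p, p \in <<[set x in S]>> & pcode p = d.
move=> c_bfs; suff [Pseen _] : {in (bfs_state (map pcode S) k).1, forall d, P d} /\
  {subset (bfs_state (map pcode S) k).2 <= (bfs_state (map pcode S) k).1} by apply: Pseen.
elim: k {c_bfs} => [|k [IH1 IH2]] /=.
  by split=> // d; rewrite inE => /eqP->; exists 1; rewrite ?group1 ?pcode1.
split=> [d|d /mem_take //]; rewrite mem_add_new => /orP[/IH1 //|].
case/allpairsP => -[c1 _] /= [/IH2/IH1[p Sp <-] /mapP[s sS ->] ->].
by exists (p * s); rewrite ?pcodeM // groupM // mem_gen // inE.
Qed.

Lemma bfs_closed_gen (S : seq {perm 'I_n.+1}) l :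
  pcode_id \in l -> bfs_closed (map pcode S) l ->
  forall p, p \in <<[set x in S]>> -> pcode p \in l.
Proof.
move=> l1 l_closed.
pose U := [set u | [forall q, (pcode q \in l) ==> (pcode (q * u) \in l)]].
have gU : group_set U.
  apply/group_setP; split=> [|u v]; rewrite !inE.
    by apply/forallP => q; rewrite mulg1 implybb.
  move=> /forallP Uu /forallP Uv; apply/forallP => q; apply/implyP => lq.
  by rewrite mulgA (implyP (Uv _)) ?(implyP (Uu _)).
have sSU : <<[set x in S]>> \subset Group gU.
  rewrite gen_subG; apply/subsetP => s; rewrite !inE => sS.
  apply/forallP => q; apply/implyP => lq; rewrite pcodeM.
  by apply: (allP (allP l_closed _ lq)); apply: map_f.
by move=> p /(subsetP sSU); rewrite inE => /forallP/(_ 1); rewrite mul1g pcode1 l1.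
Qed.

Lemma bfs_genP (S : seq {perm 'I_n.+1}) k (l := bfs (map pcode S) k) :
  bfs_closed (map pcode S) l ->
  #|<<[set x in S]>>| = size l /\ forall p, (p \in <<[set x in S]>>) = (pcode p \in l).
Proof.
move=> l_closed.
have memG p : (p \in <<[set x in S]>>) = (pcode p \in l).
  apply/idP/idP; first exact/bfs_closed_gen/l_closed/pcode_id_bfs.
  by case/bfs_pcode_gen => q Sq /pcode_inj <-.
split=> //; rewrite cardE -(size_map pcode); apply/perm_size/uniq_perm.
- by rewrite map_inj_uniq ?enum_uniq //; apply: pcode_inj.
- exact: uniq_bfs.
move=> c; apply/mapP/idP => [[p] | lc]; first by rewrite mem_enum memG => ? ->.
by have [p Sp <-] := bfs_pcode_gen lc; exists p; rewrite ?mem_enum.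
Qed.

End PermCode.
Arguments pcode {n} p : simpl never.
Arguments pcode_inj {n}.

Lemma mem_index_le2 (T : finGroupType) (K G : {group T}) x :
  K \subset G -> #|G| <= 2 * #|K| -> x \in G -> x ^+ 3 = 1 -> x \in K.
Proof.
move=> sKG leG xG x3.
have le_iKG : #|G : K| <= 2.
  by rewrite -(leq_pmul2l (cardG_gt0 K)) (Lagrange sKG) mulnC.
case iKG : #|G : K| le_iKG (indexg_gt0 G K) => [|[|[|//]]] // _ _.
  by apply: (subsetP _ x xG); rewrite -indexg_eq1 iKG.
have /andP[_ nKG] := index2_normal sKG iKG; have nKx := subsetP nKG x xG.
have x2 : coset K x ^+ 2 = 1.
  by rewrite -iKG -card_quotient // expg_cardG // mem_quotient.
have x3' : coset K x ^+ 3 = 1 by rewrite -morphX // x3 morph1.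
by apply: coset_idr; rewrite // -x3' expgSr x2 mul1g.
Qed.

Lemma Sym5_commuting_count :
  all (fun u => (u == pcode_id 4) ||
    (count (fun v => pcode_mul v u == pcode_mul u v) (permutations (pcode_id 4)) < 24))
    (permutations (pcode_id 4)).
Proof. by vm_compute. Qed.

Lemma card_cent1_Sym5 (z : {perm 'I_5}) : z != 1 -> #|'C[z]| < 24.
Proof.
pose commuting v := pcode_mul v (pcode z) == pcode_mul (pcode z) v.
move=> nt_z; apply: (@leq_ltn_trans (count commuting (permutations (pcode_id 4)))).
  rewrite -size_filter cardE -(size_map pcode); apply: uniq_leq_size.
    by rewrite map_inj_uniq ?enum_uniq //; apply: pcode_inj.
  move=> c /mapP[p]; rewrite mem_enum => /cent1P cpz ->.
  by rewrite mem_filter /commuting pcode_permutations -!pcodeM cpz eqxx.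
have := allP Sym5_commuting_count _ (pcode_permutations z).
by rewrite -pcode1 (inj_eq pcode_inj) (negbTE nt_z).
Qed.

Lemma Sym5_cent1_sub (T : finGroupType) (Q X : {group T}) z :
  Q \isog 'Sym_('I_5) -> z \in Q -> z != 1 -> X \subset 'C_Q[z] -> #|X| = 12 ->
  z \in X.
Proof.
case/isogP=> f injf _ Qz nt_z sXC cardX; apply: contraT => X'z.
set J := <<X :|: [set z]>>.
have sXJ : X \subset J by rewrite sub_gen ?subsetUl.
have ltXJ : #|X| < #|J|.
  by apply/proper_card/properP; split=> //; exists z; rewrite // mem_gen // !inE eqxx orbT.
have geJ : 24 <= #|J| by move: ltXJ; case/dvdnP: (cardSg sXJ) => [[|[|m]] ->]; rewrite cardX.
have sJC : J \subset 'C_Q[z] by rewrite gen_subG subUset sXC sub1set inE Qz cent1id.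
have sCQ : 'C_Q[z] \subset Q by apply: subsetIl.
have : #|J| < 24.
  apply: leq_ltn_trans (subset_leq_card sJC) _; rewrite -(card_injm injf sCQ).
  have nt_fz : f z != 1 by rewrite morph_injm_eq1.
  apply: leq_ltn_trans (card_cent1_Sym5 nt_fz).
  by apply/subset_leq_card/morphim_cent1s; rewrite ?subsetIr.
by rewrite ltnNge geJ.
Qed.

Definition cycle012 : {perm 'I_4} := tperm (inord 0) (inord 1) * tperm (inord 0) (inord 2).
Definition cycle123 : {perm 'I_4} := tperm (inord 1) (inord 2) * tperm (inord 1) (inord 3).

Lemma Alt4_3cycles :
  [/\ cycle012 \in 'Alt_('I_4), cycle123 \in 'Alt_('I_4),
      #[cycle012] = 3, #[cycle123] = 3 & cycle012 * cycle123 != cycle123 * cycle012].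
Proof.
have pcodeE := (pcodeM, pcode1, pcode_tpermE).
split; try by rewrite Alt_even odd_permM !odd_tperm !inord_eqE.
- apply: nt_prime_order => //; last by rewrite -(inj_eq pcode_inj) ?pcodeE.
  by apply: (@pcode_inj 3); rewrite !expgS expg0 mulg1 ?pcodeE.
- apply: nt_prime_order => //; last by rewrite -(inj_eq pcode_inj) ?pcodeE.
  by apply: (@pcode_inj 3); rewrite !expgS expg0 mulg1 ?pcodeE.
by rewrite -(inj_eq pcode_inj) ?pcodeE.
Qed.

Section Alt4Sylow.

Variables (T : finGroupType) (K : {group T}).
Hypothesis isoK : K \isog 'Alt_('I_4).

Lemma card_Alt4 : #|K| = 12.
Proof.
rewrite (card_isog isoK); have := card_Alt (T := 'I_4); rewrite card_ord => /(_ isT).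
by move/(congr1 (divn^~ 2)); rewrite mulKn.
Qed.

Lemma Syl3_Alt4 (P : {group T}) : (P \in 'Syl_3(K)) = (P \subset K) && (#|P| == 3).
Proof. by rewrite inE pHallE card_Alt4 p_part. Qed.

Lemma Alt4_two_Syl3 :
  exists P1 P2 : {group T}, [/\ P1 \in 'Syl_3(K), P2 \in 'Syl_3(K) & P1 != P2].
Proof.
case/isogP: isoK => f injf fK; have [Ax Ay ox oy nc] := Alt4_3cycles.
have /morphimP[x _ Kx ex] : cycle012 \in f @* K by rewrite fK.
have /morphimP[y _ Ky ey] : cycle123 \in f @* K by rewrite fK.
exists <[x]>%G, <[y]>%G; rewrite !Syl3_Alt4 !cycle_subG Kx Ky /= -!orderE.
rewrite -(order_injm injf Kx) -(order_injm injf Ky) -ex -ey ox oy; split=> //.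
apply: contraNneq nc => /(congr1 val) /= exy; rewrite ex ey -!morphM //.
apply/eqP; congr (f _); apply/cent1P.
by rewrite -cent_cycle (subsetP (cycle_abelian y)) // -exy cycle_id.
Qed.

Lemma card_Syl3_Alt4 : #|'Syl_3(K)| = 4.
Proof.
have [P1 [P2 [sylP1 sylP2 neP12]]] := Alt4_two_Syl3.
have gt1 : 1 < #|'Syl_3(K)|.
  rewrite (cardD1 P1) sylP1 ltnS lt0n; apply/existsP; exists P2.
  by move: sylP2; rewrite !inE eq_sym neP12.
move: (card_Syl_dvd 3 K) (card_Syl_mod K (isT : prime 3)) gt1.
rewrite card_Alt4 dvdn_divisors //; move: #|_| => m.
by rewrite !inE => /orP[|/orP[|/orP[|/orP[|/orP[]]]]] /eqP->.
Qed.

Lemma subnorm_Syl3_Alt4 (P : {group T}) : P \in 'Syl_3(K) -> 'N_K(P) = P.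
Proof.
move=> sylP; have := sylP; rewrite inE => /card_Syl; rewrite card_Syl3_Alt4 => iN.
have := Lagrange (subsetIl K 'N(P)); rewrite -iN card_Alt4 => cardN.
move: sylP; rewrite Syl3_Alt4 => /andP[sPK /eqP cardP].
apply/eqP; rewrite eq_sym eqEcard subsetI sPK normG cardP.
by rewrite -(leq_pmul2r (isT : 0 < 4)) cardN.
Qed.

Lemma Syl3_Alt4_norm1 k : k \in K -> (forall P, P \in 'Syl_3(K) -> k \in 'N(P)) -> k = 1.
Proof.
move=> Kk nPk; have [P1 [P2 [sylP1 sylP2 neP12]]] := Alt4_two_Syl3.
have P1k : k \in P1 by rewrite -(subnorm_Syl3_Alt4 sylP1) inE Kk nPk.
have P2k : k \in P2 by rewrite -(subnorm_Syl3_Alt4 sylP2) inE Kk nPk.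
move: sylP1 sylP2; rewrite !Syl3_Alt4 => /andP[_ /eqP cardP1] /andP[_ /eqP cardP2].
have tiP12 : P1 :&: P2 = 1.
  apply: prime_TIg; first by rewrite cardP1.
  apply: contra neP12 => sP12.
  by rewrite -val_eqE eqEcard sP12 cardP1 cardP2.
by move/setP/(_ k): tiP12; rewrite !inE P1k P2k => /esym/eqP.
Qed.

End Alt4Sylow.

Lemma mem_mul_index2 (T : finGroupType) (K G : {group T}) x y :
  K \subset G -> #|G : K| = 2 -> x \in G -> y \in G ->
  (x * y \in K) = ((x \in K) == (y \in K)).
Proof.
move=> sKG iKG Gx Gy; have [Kx | K'x] := boolP (x \in K).
  by rewrite groupMl // eq_sym eqb_id.
have [Ky | K'y] := boolP (y \in K); first by rewrite groupMr // (negbTE K'x).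
have /andP[_ nKG] := index2_normal sKG iKG.
have : y \in K :* x^-1.
  by rewrite (rcoset_index2 sKG iKG) ?inE ?groupV; apply/andP; split.
rewrite mem_rcoset invgK => Kyx.
by rewrite -(memJ_norm _ (subsetP nKG _ (groupVr Gx))) conjgE invgK mulgK in Kyx; rewrite Kyx.
Qed.

Definition cyc_pcode (s : seq nat) : seq nat :=
  if s is a :: s' then
    foldr (fun b u => pcode_mul (pcode_tperm 7 a.-1 b.-1) u) (pcode_id 7) s'
  else pcode_id 7.

Definition on_points (s : seq nat) := all (fun a => 0 < a <= 8) s.

Lemma pcode_cyc s : on_points s -> pcode (cyc s) = cyc_pcode s.
Proof.
case: s => [|a s] /=; first by rewrite pcode1.
case/andP=> /andP[a_gt0 a_le8]; elim: s => [|b s IH] /=; first by rewrite pcode1.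
case/andP=> /andP[b_gt0 b_le8] s_pts; rewrite pcodeM IH // pcode_tpermE //.
- by rewrite -ltnS prednK.
- by rewrite -ltnS prednK.
Qed.

Definition cycprod (w : seq (seq nat)) : {perm 'I_8} := \prod_(c <- w) cyc c.
Definition cycprod_pcode (w : seq (seq nat)) :=
  foldr (fun c u => pcode_mul (cyc_pcode c) u) (pcode_id 7) w.

Lemma pcode_cycprod w : all on_points w -> pcode (cycprod w) = cycprod_pcode w.
Proof.
rewrite /cycprod; elim: w => [|c w IH]; first by rewrite big_nil pcode1.
by case/andP=> c_pts w_pts; rewrite big_cons pcodeM pcode_cyc // IH.
Qed.

Definition words_group (ws : seq (seq (seq nat))) : {group {perm 'I_8}} :=
  <<[set x in map cycprod ws]>>%G.
Definition words_bfs ws k := bfs 7 (map cycprod_pcode ws) k.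

Lemma map_cycprod_pcode ws :
  all (all on_points) ws -> map cycprod_pcode ws = map (@pcode 7) (map cycprod ws).
Proof.
by move=> ws_pts; rewrite -map_comp; apply/eq_in_map => w /(allP ws_pts) /pcode_cycprod <-.
Qed.

Lemma words_groupP ws k m (l := words_bfs ws k) :
  all (all on_points) ws -> bfs_closed (map cycprod_pcode ws) l -> size l = m ->
  #|words_group ws| = m /\ forall p, (p \in words_group ws) = (pcode p \in l).
Proof. by rewrite /l /words_bfs => /map_cycprod_pcode-> /bfs_genP[-> ?] <-. Qed.

Lemma words_bfs_pcode ws k c : all (all on_points) ws ->
  c \in words_bfs ws k -> exists2 p, p \in words_group ws & pcode p = c.
Proof. by rewrite /words_bfs => /map_cycprod_pcode->; apply: bfs_pcode_gen. Qed.

Definition L1_words : seq (seq (seq nat)) :=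
  [:: [:: [:: 1; 2; 3]]; [:: [:: 2; 3; 4]]; [:: [:: 5; 6; 7]]; [:: [:: 6; 7; 8]];
      [:: [:: 1; 2]; [:: 5; 6]]; [:: [:: 1; 5]; [:: 2; 6]; [:: 3; 7]; [:: 4; 8]]]%N.
Definition L2_words : seq (seq (seq nat)) :=
  [:: [:: [:: 1; 2; 3]]; [:: [:: 2; 3; 4]]; [:: [:: 5; 6; 7]]; [:: [:: 6; 7; 8]];
      [:: [:: 1; 6; 2; 5]; [:: 3; 7]; [:: 4; 8]]]%N.
Definition Alt_lo_words : seq (seq (seq nat)) := [:: [:: [:: 1; 2; 3]]; [:: [:: 2; 3; 4]]]%N.
Definition Alt_hi_words : seq (seq (seq nat)) := [:: [:: [:: 5; 6; 7]]; [:: [:: 6; 7; 8]]]%N.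

Lemma L1_words_group : L1 = words_group L1_words.
Proof.
rewrite /L1 /words_group /L1_words !map_cons /cycprod !big_cons !big_nil !mulg1 !mulgA.
by congr <<_>>; apply/setP => x; rewrite !inE -!orbA.
Qed.

Lemma L2_words_group : L2 = words_group L2_words.
Proof.
rewrite /L2 /words_group /L2_words !map_cons /cycprod !big_cons !big_nil !mulg1 !mulgA.
by congr <<_>>; apply/setP => x; rewrite !inE -!orbA.
Qed.

Notation Alt_lo := (words_group Alt_lo_words).
Notation Alt_hi := (words_group Alt_hi_words).

Notation l1 := (words_bfs L1_words 12).
Notation l2 := (words_bfs L2_words 12).
Notation lAlt_lo := (words_bfs Alt_lo_words 6).
Notation lAlt_hi := (words_bfs Alt_hi_words 6).

Lemma L1_pcode : #|L1| = 576 /\ forall p, (p \in L1) = (pcode p \in l1).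
Proof. by rewrite L1_words_group; apply: words_groupP; vm_compute. Qed.

Lemma L2_pcode : #|L2| = 576 /\ forall p, (p \in L2) = (pcode p \in l2).
Proof. by rewrite L2_words_group; apply: words_groupP; vm_compute. Qed.

Lemma Alt_lo_pcode : #|Alt_lo| = 12 /\ forall p, (p \in Alt_lo) = (pcode p \in lAlt_lo).
Proof. by apply: words_groupP; vm_compute. Qed.

Lemma Alt_hi_pcode : #|Alt_hi| = 12 /\ forall p, (p \in Alt_hi) = (pcode p \in lAlt_hi).
Proof. by apply: words_groupP; vm_compute. Qed.

(* The points 1, ..., 4 of [L1] and [L2], encoded as 0, ..., 3. *)
Definition lo : {set 'I_8} := [set i : 'I_8 | i < 4].

Lemma card_lo : #|lo| = 4.
Proof. by rewrite cardsE -sum1_card -(big_mkord (fun i => i < 4) (fun=> 1%N)) unlock. Qed.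

(* [perm.Sym S] is the group of permutations supported in [S]; the unqualified
   [Sym] is the full symmetric group of alt.v. *)
Lemma card_Sym_lo : #|perm.Sym lo| = 24.
Proof. by rewrite perm.card_Sym card_lo. Qed.

Lemma card_Sym_hi : #|perm.Sym (~: lo)| = 24.
Proof. by rewrite perm.card_Sym cardsCs setCK card_ord card_lo. Qed.

Lemma Sym_lo_pcode q : drop 4 (pcode q) = iota 4 4 -> q \in perm.Sym lo.
Proof.
move=> fix_hi; rewrite inE; apply/subsetP => i; rewrite !inE; apply: contraR.
by rewrite -leqNgt => /(pcode_fix_drop fix_hi)->.
Qed.

Lemma Sym_hi_pcode q : take 4 (pcode q) = iota 0 4 -> q \in perm.Sym (~: lo).
Proof.
move=> fix_lo; rewrite inE; apply/subsetP => i; rewrite !inE; apply: contraR.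
by rewrite negbK => /(pcode_fix_take fix_lo)->.
Qed.

Lemma words_group_sub ws (S G : {group {perm 'I_8}}) :
  all (all on_points) ws ->
  all (fun w => let c := cycprod_pcode w in pcode_mul c (pcode_mul c c) == pcode_id 7) ws ->
  {subset map cycprod ws <= S} -> G \subset S -> #|S| <= 2 * #|G| ->
  words_group ws \subset G.
Proof.
move=> ws_pts ws_cube sws_S sGS leS; rewrite gen_subG; apply/subsetP => x.
rewrite inE => /mapP[w w_in ->]; apply: (mem_index_le2 sGS leS); first by rewrite sws_S ?map_f.
apply: pcode_inj; rewrite !expgS expg0 mulg1 !pcodeM pcode1 pcode_cycprod ?(allP ws_pts) //.
exact/eqP/(allP ws_cube).
Qed.

Lemma Alt_lo_unique (G : {group {perm 'I_8}}) :
  G \subset perm.Sym lo -> #|G| = 12 -> G :=: Alt_lo.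
Proof.
move=> sGS cardG; apply/eqP; rewrite eq_sym eqEcard Alt_lo_pcode.1 cardG leqnn andbT.
apply: words_group_sub sGS _ => //; rewrite ?card_Sym_lo ?cardG //.
move=> x /mapP[w w_in ->]; apply: Sym_lo_pcode.
by rewrite pcode_cycprod; apply/eqP; move: w w_in; apply/allP.
Qed.

Lemma Alt_hi_unique (G : {group {perm 'I_8}}) :
  G \subset perm.Sym (~: lo) -> #|G| = 12 -> G :=: Alt_hi.
Proof.
move=> sGS cardG; apply/eqP; rewrite eq_sym eqEcard Alt_hi_pcode.1 cardG leqnn andbT.
apply: words_group_sub sGS _ => //; rewrite ?card_Sym_hi ?cardG //.
move=> x /mapP[w w_in ->]; apply: Sym_hi_pcode.
by rewrite pcode_cycprod; apply/eqP; move: w w_in; apply/allP.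
Qed.

Definition block_pcodes :=
  [seq x ++ y | x <- permutations (iota 0 4), y <- permutations (iota 4 4)].
Definition swap_pcodes :=
  [seq x ++ y | x <- permutations (iota 4 4), y <- permutations (iota 0 4)].

(* For a block-preserving code [c]: [c] lies in L1 :&: L2, or a factor from [Ahi]
   (resp. [Alo]) turns it into a permutation of the lower (upper) block outside
   [Alo] ([Ahi]).  The lists are parameters so that the VM computes them once. *)
Definition block_certificate (L1 L2 Alo Ahi : seq (seq nat)) (c : seq nat) := [||
  (c \in L1) && (c \in L2),
  has (fun b => (drop 4 (pcode_mul c b) == iota 4 4) && (pcode_mul c b \notin Alo)) Ahi |
  has (fun a => (take 4 (pcode_mul c a) == iota 0 4) && (pcode_mul c a \notin Ahi)) Alo].

(* Rewriting with this equation, rather than unfolding, keeps the kernel from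
   evaluating the lists while checking the conversion. *)
Lemma block_certificateE L1 L2 Alo Ahi c : block_certificate L1 L2 Alo Ahi c = [||
  (c \in L1) && (c \in L2),
  has (fun b => (drop 4 (pcode_mul c b) == iota 4 4) && (pcode_mul c b \notin Alo)) Ahi |
  has (fun a => (take 4 (pcode_mul c a) == iota 0 4) && (pcode_mul c a \notin Ahi)) Alo].
Proof. by []. Qed.

Lemma block_pcodes_L12 : all (block_certificate l1 l2 lAlt_lo lAlt_hi) block_pcodes.
Proof. by vm_compute. Qed.

Definition in_either (L1 L2 : seq (seq nat)) (c : seq nat) := (c \in L1) || (c \in L2).

Lemma in_eitherE L1 L2 c : in_either L1 L2 c = (c \in L1) || (c \in L2).
Proof. by []. Qed.

Lemma swap_pcodes_L12 : all (in_either l1 l2) swap_pcodes.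
Proof. by vm_compute. Qed.

Lemma L12_of_block (G : {group {perm 'I_8}}) p :
  Alt_lo \subset G -> Alt_hi \subset G ->
  G :&: perm.Sym lo \subset Alt_lo -> G :&: perm.Sym (~: lo) \subset Alt_hi ->
  p \in G -> (forall i, (p i < 4) = (i < 4)) -> (p \in L1) && (p \in L2).
Proof.
move=> sAloG sAhiG loG hiG Gp p_lo.
have blk_p : pcode p \in block_pcodes.
  apply: (@pcode_blocks 7 p 4); rewrite ?iota_uniq ?size_iota // => i.
    by move=> lt_i4; rewrite mem_iota leq0n p_lo.
  by move=> le4i; rewrite mem_iota ltn_ord andbT leqNgt p_lo -leqNgt.
move: (allP block_pcodes_L12 _ blk_p); rewrite block_certificateE.
case/or3P=> [|/hasP[b Ahi_b]|/hasP[a Alo_a]]; first by rewrite L1_pcode.2 L2_pcode.2.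
- have [q Ahi_q <-] := words_bfs_pcode (ws := Alt_hi_words) isT Ahi_b.
  rewrite -pcodeM => /andP[/eqP/Sym_lo_pcode Sym_pq out]; rewrite -Alt_lo_pcode.2 in out.
  case/negP: out; apply: (subsetP loG).
  by rewrite in_setI Sym_pq andbT (groupM Gp (subsetP sAhiG q Ahi_q)).
- have [q Alo_q <-] := words_bfs_pcode (ws := Alt_lo_words) isT Alo_a.
  rewrite -pcodeM => /andP[/eqP/Sym_hi_pcode Sym_pq out]; rewrite -Alt_hi_pcode.2 in out.
  case/negP: out; apply: (subsetP hiG).
  by rewrite in_setI Sym_pq andbT (groupM Gp (subsetP sAloG q Alo_q)).
Qed.

Lemma L12_of_swap (p : {perm 'I_8}) :
  (forall i, (p i < 4) = ~~ (i < 4)) -> (p \in L1) || (p \in L2).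
Proof.
move=> p_sw; rewrite L1_pcode.2 L2_pcode.2 -in_eitherE; apply: (allP swap_pcodes_L12).
apply: (@pcode_blocks 7 p 4); rewrite ?iota_uniq ?size_iota // => i.
  by move=> lt_i4; rewrite mem_iota ltn_ord andbT leqNgt p_sw lt_i4.
by move=> le4i; rewrite mem_iota leq0n p_sw -leqNgt.
Qed.

Section Amalgam.

Variables (gT : finGroupType) (Gx Ge : {group gT}) (t : gT).
Hypotheses (indexGx : #|Gx : Gxy Gx Ge| = 5) (indexGe : #|Ge : Gxy Gx Ge| = 2).
Hypotheses (GeGx_t : t \in Ge :\: Gx) (Gxy1_triv : Gxy1 Gx Ge t = 1).
Hypotheses (isoS5 : Gx / Gx1 Gx Ge \isog 'Sym_('I_5)) (isoA4 : Gx1 Gx Ge \isog 'Alt_('I_4)).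

Local Notation H := (Gx :&: Ge)%G.
Local Notation A := (gcore_group H Gx).
Local Notation B := (A :^ t)%G.

Let sHGx : H \subset Gx := subsetIl Gx Ge.
Let sHGe : H \subset Ge := subsetIr Gx Ge.
Let nAGx : Gx \subset 'N(A) := gcore_norm H Gx.
Let sAH : A \subset H := gcore_sub H Gx.

Let tiAB : A :&: B = 1 := Gxy1_triv.

Lemma card_Ge : #|Ge| = 576.
Proof.
have cardGx : #|Gx| = 1440.
  have := card_isog isoS5; rewrite card_Sym card_ord card_quotient // => iAGx.
  by rewrite -(Lagrange (subset_trans sAH sHGx)) iAGx (card_Alt4 isoA4).
have cardH : #|H| = 288.
  by apply/eqP; rewrite -(eqn_pmul2r (isT : 0 < 5)) -{1}indexGx Lagrange // cardGx.
by rewrite -(Lagrange sHGe) [#|Ge : _|]indexGe cardH.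
Qed.

Lemma Ge_t : t \in Ge. Proof. by case/setDP: GeGx_t. Qed.
Lemma H'_t : t \notin H. Proof. by case/setDP: GeGx_t => _; apply: contra => /setIP[]. Qed.

Lemma mem_mulH g h : g \in Ge -> h \in Ge -> (g * h \in H) = ((g \in H) == (h \in H)).
Proof. exact: mem_mul_index2 sHGe indexGe. Qed.

Lemma normal_H : H <| Ge. Proof. exact: index2_normal sHGe indexGe. Qed.

Lemma conjA_Ge g : g \in Ge -> A :^ g = if g \in H then A else B.
Proof.
move=> Ge_g; case: ifP => [Hg | H'g]; first exact/normP/(subsetP nAGx)/(subsetP sHGx).
have Hgt : g * t^-1 \in H by rewrite mem_mulH ?groupV ?Ge_t // H'g (negbTE H'_t).
by rewrite -(mulgKV t g) conjsgM (normP (subsetP nAGx _ (subsetP sHGx _ Hgt))).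
Qed.

Lemma conjB_Ge g : g \in Ge -> B :^ g = if g \in H then B else A.
Proof.
move=> Ge_g; rewrite -conjsgM conjA_Ge; last by rewrite groupM ?Ge_t.
by rewrite mem_mulH ?Ge_t // (negbTE H'_t); case: (g \in H).
Qed.

Lemma normA_H : H \subset 'N(A).
Proof. by apply/subsetP => h Hh; apply/normP; rewrite conjA_Ge ?Hh ?(subsetP sHGe). Qed.

Lemma normB_H : H \subset 'N(B).
Proof. by apply/subsetP => h Hh; apply/normP; rewrite conjB_Ge ?Hh ?(subsetP sHGe). Qed.

Lemma sBH : B \subset H.
Proof.
have /andP[_ /subsetP nHGe] := normal_H.
by rewrite -(normP (nHGe t Ge_t)) conjSg.
Qed.

Lemma cent_A_B : A \subset 'C(B).
Proof.
apply/centsP => a Aa b Bb; apply/commgP.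
suff : [~ a, b] \in A :&: B by rewrite tiAB inE.
rewrite inE; apply/andP; split.
  by rewrite commgEl groupMl ?groupV // memJ_norm // (subsetP normA_H) ?(subsetP sBH).
by rewrite commgEr groupMr // memJ_norm ?groupV // (subsetP normB_H) ?(subsetP sAH).
Qed.

Lemma isoB : B \isog 'Alt_('I_4).
Proof. exact: isog_trans (isog_symr (conj_isog A t)) isoA4. Qed.

Local Notation SA := 'Syl_3(A).
Local Notation SB := 'Syl_3(B).

Lemma Syl3_conj (K P : {group gT}) x :
  x \in K -> P \in 'Syl_3(K) -> (P :^ x)%G \in 'Syl_3(K).
Proof. by move=> Kx; rewrite !inE /= pHallJ. Qed.

Lemma cent_B_trivial b : b \in B -> b \in 'C(B) -> b = 1.
Proof.
move=> Bb cBb; apply: (Syl3_Alt4_norm1 isoB Bb) => P; rewrite (Syl3_Alt4 isoB).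
by case/andP=> sPB _; apply: (subsetP (cent_sub P)); apply: (subsetP (centS sPB)).
Qed.

Lemma cent_H_B_sub_A : 'C_H(B) \subset A.
Proof.
apply/subsetP => h /setIP[Hh cBh]; have nAh := subsetP normA_H h Hh.
have [/coset_idr-> // | ntz] := eqVneq (coset A h) 1.
have nAB : B \subset 'N(A) := subset_trans sBH normA_H.
have : coset A h \in B / A.
  apply: (Sym5_cent1_sub isoS5) => //.
  - exact/mem_quotient/(subsetP sHGx).
  - rewrite subsetI quotientS ?(subset_trans sBH sHGx) //=.
    by apply: morphim_cent1s; rewrite ?sub_cent1.
  - by rewrite -(card_isog (quotient_isog nAB tiAB)) (card_Alt4 isoB).
move/(mem_morphpre nAh); rewrite quotientK // => /mulsgP[a b Aa Bb def_h].
have cBb : b \in 'C(B).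
  by rewrite -(mulKg a b) -def_h groupM ?groupV // (subsetP cent_A_B).
by rewrite def_h (cent_B_trivial Bb cBb) mulg1.
Qed.

Lemma normSyl3_B_sub_A h : h \in H -> (forall Q, Q \in SB -> h \in 'N(Q)) -> h \in A.
Proof.
move=> Hh nQh; apply: (subsetP cent_H_B_sub_A); rewrite inE Hh /=.
apply/centP => b Bb; apply/commgP/eqP; apply: (Syl3_Alt4_norm1 isoB).
  by rewrite commgEr groupMr // memJ_norm ?groupV // (subsetP normB_H).
move=> Q sylQ; rewrite commgEl groupMl ?groupV ?nQh //.
by rewrite -mem_conjgV -normJ nQh // Syl3_conj ?groupV.
Qed.

Lemma normSyl3_A_sub_B h : h \in H -> (forall P, P \in SA -> h \in 'N(P)) -> h \in B.
Proof.
move=> Hh nPh; have /andP[_ /subsetP nHGe] := normal_H.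
have AtV : A :^ t^-1 = B by rewrite conjA_Ge ?groupV ?Ge_t // (negbTE H'_t).
rewrite -AtV mem_conjgV.
apply: normSyl3_B_sub_A => [|Q sylQ]; first by rewrite memJ_norm ?nHGe ?Ge_t.
have sylQ' : (Q :^ t^-1)%G \in SA.
  by rewrite inE -(pHallJ2 _ _ _ t) conjsgKV; rewrite inE in sylQ.
by have := nPh _ sylQ'; rewrite -(memJ_conjg _ t) -normJ conjsgKV.
Qed.

Lemma Syl3_AB_disjoint P : P \in SA -> P \notin SB.
Proof.
rewrite (Syl3_Alt4 isoA4) (Syl3_Alt4 isoB) => /andP[sPA /eqP cardP].
apply/negP => /andP[sPB _]; have : P \subset A :&: B by rewrite subsetI sPA.
by rewrite tiAB => /subset_leq_card; rewrite cards1 cardP.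
Qed.

Definition SylAB : seq {group gT} := enum SA ++ enum SB.

Lemma mem_SylAB P : (P \in SylAB) = (P \in SA) || (P \in SB).
Proof. by rewrite mem_cat !mem_enum. Qed.

Lemma size_SylAB : size SylAB = 8.
Proof. by rewrite size_cat -!cardE (card_Syl3_Alt4 isoA4) (card_Syl3_Alt4 isoB). Qed.

Lemma uniq_SylAB : uniq SylAB.
Proof.
rewrite cat_uniq !enum_uniq andbT /=; apply/hasPn => P.
by rewrite !mem_enum => sylB; apply: contraL sylB => /Syl3_AB_disjoint.
Qed.

Definition label (i : 'I_8) : {group gT} := nth 1%G SylAB i.

Lemma label_inj : injective label.
Proof.
move=> i j /eqP; rewrite nth_uniq ?size_SylAB ?ltn_ord ?uniq_SylAB //.
by move/eqP/val_inj.
Qed.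

Lemma mem_label i : label i \in SylAB.
Proof. by rewrite mem_nth ?size_SylAB. Qed.

Lemma label_SA i : (label i \in SA) = (i < 4).
Proof.
have sizeA : size (enum SA) = 4 by rewrite -cardE (card_Syl3_Alt4 isoA4).
rewrite /label nth_cat sizeA; case: ltnP => [lt_i4 | le4i].
  by rewrite -mem_enum mem_nth ?sizeA.
have sizeB : size (enum SB) = 4 by rewrite -cardE (card_Syl3_Alt4 isoB).
by apply/negP => /Syl3_AB_disjoint; rewrite -mem_enum mem_nth // sizeB ltn_subLR.
Qed.

Definition slot (P : {group gT}) : 'I_8 := inord (index P SylAB).

Lemma label_slot P : P \in SylAB -> label (slot P) = P.
Proof.
by move=> ABP; rewrite /label /slot inordK ?nth_index // -size_SylAB index_mem.
Qed.

Lemma SylAB_conj g P : g \in Ge -> P \in SylAB ->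
  (P :^ g)%G \in SylAB /\ ((P :^ g)%G \in SA) = ((P \in SA) == (g \in H)).
Proof.
have SylJ (X : {group gT}) : ((P :^ g)%G \in 'Syl_3(X :^ g)) = (P \in 'Syl_3(X)).
  by rewrite !inE /= pHallJ2.
have SA'SB Q : Q \in SB -> Q \notin SA by apply: contraL; apply: Syl3_AB_disjoint.
move=> Ge_g; rewrite !mem_SylAB; have [Hg | H'g] := boolP (g \in H).
  have [eA eB] : A :^ g = A /\ B :^ g = B by rewrite conjA_Ge ?conjB_Ge ?Hg.
  case/orP=> sylP.
    have sylPg : (P :^ g)%G \in SA by rewrite -eA SylJ.
    by rewrite sylPg sylP.
  have sylPg : (P :^ g)%G \in SB by rewrite -eB SylJ.
  by rewrite sylPg orbT (negbTE (SA'SB _ sylP)) (negbTE (SA'SB _ sylPg)).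
have [eA eB] : A :^ g = B /\ B :^ g = A by rewrite conjA_Ge ?conjB_Ge ?(negbTE H'g).
case/orP=> sylP.
  have sylPg : (P :^ g)%G \in SB by rewrite -eA SylJ.
  by rewrite sylPg orbT sylP (negbTE (SA'SB _ sylPg)).
have sylPg : (P :^ g)%G \in SA by rewrite -eB SylJ.
by rewrite sylPg (negbTE (SA'SB _ sylP)).
Qed.

Definition sylact (i : 'I_8) (g : gT) := if g \in Ge then slot (label i :^ g)%G else i.

Lemma label_sylact i g : g \in Ge -> label (sylact i g) = (label i :^ g)%G.
Proof.
by move=> Ge_g; rewrite /sylact Ge_g label_slot //; case: (SylAB_conj Ge_g (mem_label i)).
Qed.

Lemma sylact_is_action : is_action Ge sylact.
Proof.
split=> [g i j | i g h Ge_g Ge_h]; last first.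
  by apply: label_inj; rewrite !label_sylact ?groupM //; apply: val_inj; rewrite /= conjsgM.
rewrite /sylact; case: ifP => // Ge_g /(congr1 label).
rewrite !label_slot ?(SylAB_conj Ge_g (mem_label _)).1 // => /(congr1 val) /conjsg_inj.
by move=> eq_ij; apply: label_inj; apply: val_inj.
Qed.

Definition sylaction := Action sylact_is_action.
Local Notation phi := (actperm sylaction).

Lemma label_phi g i : g \in Ge -> label (phi g i) = (label i :^ g)%G.
Proof. by move=> Ge_g; rewrite actpermE label_sylact. Qed.

Lemma phi_lt4 g i : g \in Ge -> (phi g i < 4) = ((i < 4) == (g \in H)).
Proof.
by move=> Ge_g; rewrite -!label_SA label_phi //; case: (SylAB_conj Ge_g (mem_label i)).
Qed.

Lemma phi_fixE g i : g \in Ge -> (phi g i == i) = (g \in 'N(label i)).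
Proof.
by move=> Ge_g; rewrite -(inj_eq label_inj) label_phi // -val_eqE; apply/eqP/normP.
Qed.

Lemma label_SB (i : 'I_8) : ~~ (i < 4) -> label i \in SB.
Proof. by rewrite -label_SA => SA'i; have := mem_label i; rewrite mem_SylAB (negbTE SA'i). Qed.

Lemma norm_SB_of_fix g : g \in Ge -> (forall i : 'I_8, 4 <= i -> phi g i = i) ->
  forall Q, Q \in SB -> g \in 'N(Q).
Proof.
move=> Ge_g fix_g Q sylQ; have ABQ : Q \in SylAB by rewrite mem_SylAB sylQ orbT.
rewrite -(label_slot ABQ) -phi_fixE // fix_g // leqNgt -label_SA label_slot //.
by apply: contraL sylQ => /Syl3_AB_disjoint.
Qed.

Lemma norm_SA_of_fix g : g \in Ge -> (forall i : 'I_8, i < 4 -> phi g i = i) ->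
  forall P, P \in SA -> g \in 'N(P).
Proof.
move=> Ge_g fix_g P sylP; have ABP : P \in SylAB by rewrite mem_SylAB sylP.
by rewrite -(label_slot ABP) -phi_fixE // fix_g // -label_SA label_slot.
Qed.

Lemma injm_phi : 'injm phi.
Proof.
rewrite ker_actperm; apply/subsetP => g cg; have Ge_g := astab_dom cg.
have fix_g i : phi g i = i by rewrite actpermE (astab_act cg) ?inE.
have Hg : g \in H by have := phi_lt4 ord0 Ge_g; rewrite fix_g eq_sym eqb_id.
have Ag := normSyl3_B_sub_A Hg (norm_SB_of_fix Ge_g (fun i _ => fix_g i)).
have Bg := normSyl3_A_sub_B Hg (norm_SA_of_fix Ge_g (fun i _ => fix_g i)).
by rewrite -tiAB inE Ag Bg.
Qed.

Let sAGe : A \subset Ge := subset_trans sAH sHGe.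
Let sBGe : B \subset Ge := subset_trans sBH sHGe.

Lemma phi_A : phi @* A = Alt_lo.
Proof.
apply: Alt_lo_unique; last by rewrite card_injm ?injm_phi ?(card_Alt4 isoA4).
apply/subsetP => _ /morphimP[a _ Aa ->]; rewrite inE; apply/subsetP => i.
rewrite !inE; apply: contraR => lo'i; rewrite phi_fixE ?(subsetP sAGe) //.
have := label_SB lo'i; rewrite (Syl3_Alt4 isoB) => /andP[sPB _].
exact: subsetP (cent_sub _) a (subsetP (centS sPB) a (subsetP cent_A_B a Aa)).
Qed.

Lemma phi_B : phi @* B = Alt_hi.
Proof.
apply: Alt_hi_unique; last by rewrite card_injm ?injm_phi ?(card_Alt4 isoB).
apply/subsetP => _ /morphimP[b _ Bb ->]; rewrite inE; apply/subsetP => i.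
rewrite !inE; apply: contraR; rewrite negbK => lo_i; rewrite phi_fixE ?(subsetP sBGe) //.
have := lo_i; rewrite -label_SA (Syl3_Alt4 isoA4) => /andP[sPA _].
have cAb : b \in 'C(A) by apply: (subsetP _ b Bb); rewrite centsC cent_A_B.
exact: subsetP (cent_sub _) b (subsetP (centS sPA) b cAb).
Qed.

Lemma phi_H_lo : phi @* H :&: perm.Sym lo \subset Alt_lo.
Proof.
rewrite -phi_A; apply/subsetP => _ /setIP[/morphimP[h _ Hh ->]].
rewrite inE => Sym_h.
apply: mem_morphim; first exact: subsetP sHGe h Hh.
apply: normSyl3_B_sub_A Hh (norm_SB_of_fix (subsetP sHGe h Hh) _) => i le4i.
by apply: (out_perm Sym_h); rewrite inE -leqNgt.
Qed.

Lemma phi_H_hi : phi @* H :&: perm.Sym (~: lo) \subset Alt_hi.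
Proof.
rewrite -phi_B; apply/subsetP => _ /setIP[/morphimP[h _ Hh ->]].
rewrite inE => Sym_h.
apply: mem_morphim; first exact: subsetP sHGe h Hh.
apply: normSyl3_A_sub_B Hh (norm_SA_of_fix (subsetP sHGe h Hh) _) => i lt_i4.
by apply: (out_perm Sym_h); rewrite !inE lt_i4.
Qed.

Lemma phi_H_L12 h : h \in H -> (phi h \in L1) && (phi h \in L2).
Proof.
move=> Hh; apply: (L12_of_block (G := phi @* H)).
- by rewrite -phi_A; apply: morphimS.
- by rewrite -phi_B; apply: morphimS sBH.
- exact: phi_H_lo.
- exact: phi_H_hi.
- exact: mem_morphim (subsetP sHGe h Hh) Hh.
by move=> i; rewrite phi_lt4 ?(subsetP sHGe) // Hh eqb_id.
Qed.

Lemma phi_t_L12 : (phi t \in L1) || (phi t \in L2).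
Proof. by apply: L12_of_swap => i; rewrite phi_lt4 ?Ge_t // (negbTE H'_t) eqbF_neg. Qed.

Lemma Ge_isog (L : {group {perm 'I_8}}) :
  #|L| = 576 -> (forall h, h \in H -> phi h \in L) -> phi t \in L -> Ge \isog L.
Proof.
move=> cardL HL tL; have sGeL : phi @* Ge \subset L.
  apply/subsetP => _ /morphimP[g _ Ge_g ->]; have [Hg | H'g] := boolP (g \in H).
    exact: HL.
  have Hgt : g * t^-1 \in H.
    by rewrite mem_mulH ?groupV ?Ge_t // (negbTE H'g) (negbTE H'_t).
  rewrite -(mulgKV t g) morphM ?groupV ?Ge_t ?(subsetP sHGe) //.
  exact: groupM (HL _ Hgt) tL.
have <- : phi @* Ge = L.
  by apply/eqP; rewrite eqEcard sGeL cardL card_injm ?injm_phi ?card_Ge.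
exact: sub_isog (subxx _) injm_phi.
Qed.

Lemma Ge_isog_L12 : Ge \isog L1 \/ Ge \isog L2.
Proof.
have [cardL1 _] := L1_pcode; have [cardL2 _] := L2_pcode.
rewrite L1_words_group L2_words_group in cardL1 cardL2 *.
have := phi_t_L12; rewrite L1_words_group L2_words_group.
case/orP=> [tL1 | tL2]; [left | right]; apply: Ge_isog => // h /phi_H_L12;
  by rewrite L1_words_group L2_words_group => /andP[].
Qed.

End Amalgam.

Theorem lemma5p8 (gT : finGroupType) (Gx Ge : {group gT}) (t : gT) :
  primitive_amalgam Gx Ge ->
  #|Gx : Gxy Gx Ge| = 5%N ->
  #|Ge : Gxy Gx Ge| = 2%N ->
  t \in Ge :\: Gx ->
  Gxy1 Gx Ge t = 1 ->
  Gx / Gx1 Gx Ge \isog 'Sym_('I_5) ->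
  Gx1 Gx Ge \isog 'Alt_('I_4) ->
  Ge \isog L1 \/ Ge \isog L2.
Proof.
by move=> _; apply: Ge_isog_L12.
Qed.
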